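(* For every set $\theta$ of edges of $G$, $H$ is constant on each connected component of $\Gamma_\theta=\{x\in\Gamma: E_x=\theta\}$, where $E_x=\{\{i,j\}\in E: x_{ij}>0\}$.
   Context: Let $G=(\mathbb{V},E)$ be a finite graph with adjacency $\sim$ and edge set $E$. Let $a_{ij}=a_{ji}\ge0$ ($>0$ only if $i\sim j$) and $p_{ij}=p_{ji}\in[0,1]$ ($=0$ if $i\not\sim j$), with some $a_{ij}p_{ij}>0$. Fix $h_1\in(0,1]$; $\Delta$ is the set of arrays $x=(x_{ij})$ with $x_{ij}=x_{ji}\ge0$, $x_{ij}=0$ if $i\not\sim j$, $\sum_{i,j}x_{ij}=1$, $\sum_{(i,j):a_{ij}p_{ij}>0}x_{ij}\ge h_1$; $x_i=\sum_jx_{ij}$. $H(x)=\sum_{(i,j):x_{ij}>0}a_{ij}p_{ij}x_{ij}^2/(x_ix_j)$; $F(x)_{ij}=x_{ij}\big(a_{ij}p_{ij}\frac{x_{ij}}{x_ix_j}-H(x)\big)$, with $F_{ij}=0$ if $x_{ij}=0$ and $a_{ij}p_{ij}x_{ij}/(x_ix_j):=0$ if $a_{ij}p_{ij}=0$. $\Gamma=\{x\in\Delta:F(x)=0\}$. *)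

From HB Require Import structures.
From mathcomp Require Import all_boot all_order all_algebra.
From mathcomp Require Import all_classical all_reals all_analysis.
Set Implicit Arguments. Unset Strict Implicit. Unset Printing Implicit Defensive.
Import Order.TTheory GRing.Theory Num.Theory.
Import numFieldNormedType.Exports.
Local Open Scope ring_scope.

Section Defs.
Variables (R : realType) (n : nat).

Definition simple_graph (adj : rel 'I_n) : Prop :=
  (forall i j, adj i j = adj j i) /\ (forall i, ~~ adj i i).

Definition xrow (x : 'M[R]_n) (i : 'I_n) : R := \sum_(j < n) x i j.

Definition Hfun (a p x : 'M[R]_n) : R :=
  \sum_(i < n) \sum_(j < n | 0 < x i j)
     a i j * p i j * x i j ^+ 2 / (xrow x i * xrow x j).

Definition Ffun (a p x : 'M[R]_n) : 'M[R]_n :=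
  \matrix_(i, j)
    (if x i j == 0 then 0
     else x i j * (a i j * p i j * x i j / (xrow x i * xrow x j) - Hfun a p x)).

Definition Delta (adj : rel 'I_n) (a p : 'M[R]_n) (h1 : R) : set 'M[R]_n :=
  [set x | (forall i j, x i j = x j i) /\ (forall i j, 0 <= x i j) /\
           (forall i j, ~~ adj i j -> x i j = 0) /\
           \sum_(i < n) \sum_(j < n) x i j = 1 /\
           h1 <= \sum_(i < n) \sum_(j < n | 0 < a i j * p i j) x i j].

Definition Gamma (adj : rel 'I_n) (a p : 'M[R]_n) (h1 : R) : set 'M[R]_n :=
  [set x | Delta adj a p h1 x /\ Ffun a p x = 0].

Definition supp_edges (adj : rel 'I_n) (x : 'M[R]_n) : {set {set 'I_n}} :=
  [set e : {set 'I_n} | [exists i, exists j,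
     [&& e == [set i; j], adj i j & 0 < x i j]]].

Definition Gamma_theta (adj : rel 'I_n) (a p : 'M[R]_n) (h1 : R)
  (theta : {set {set 'I_n}}) : set 'M[R]_n :=
  [set x | Gamma adj a p h1 x /\ supp_edges adj x = theta].

End Defs.

From HB Require Import structures.
From mathcomp Require Import all_boot all_order all_algebra.
From mathcomp Require Import all_classical all_reals all_analysis.
(* Imported last so that [xrow] is the row sum, not MathComp's row swap. *)
Import Order.TTheory GRing.Theory Num.Theory.
Import numFieldNormedType.Exports.
Local Open Scope ring_scope.
Local Open Scope classical_set_scope.
Set Implicit Arguments. Unset Strict Implicit.

(* Write c_ij = a_ij p_ij.  At a zero u of F every support entry satisfies
   c_ij u_ij = H(u) u_i u_j; summing over the support of row i gives
   sum_(j : u_ij > 0) u_j / c_ij = 1 / H(u) whenever u_i <> 0.  Hence for two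
   zeros x, y with the same support, the double sum
   sum_i sum_(j : y_ij > 0) x_i y_j / c_ij equals 1 / H(y) (as sum_i x_i = 1),
   and by symmetry of c and of the support it also equals 1 / H(x).  So H is
   constant on all of Gamma_theta, a fortiori on its connected components. *)

Section GammaIdentities.
Variables (R : realType) (n : nat) (adj : rel 'I_n) (a p : 'M[R]_n) (h1 : R).
Hypothesis h1_gt0 : 0 < h1.

Lemma le_xrow (u : 'M[R]_n) : (forall i j, 0 <= u i j) ->
  forall i j, u i j <= xrow u i.
Proof.
move=> u_ge0 i j; rewrite /xrow (bigD1 j) //= lerDl.
by apply: sumr_ge0 => k _.
Qed.

Lemma Gamma_xrow_gt0 u i j : Gamma adj a p h1 u -> 0 < u i j ->
  0 < xrow u i /\ 0 < xrow u j.
Proof.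
move=> [[u_sym [u_ge0 _]] _] uij; split; apply: lt_le_trans uij _.
  exact: (le_xrow u_ge0).
by rewrite u_sym; exact: (le_xrow u_ge0).
Qed.

Lemma Gamma_balance u i j : Gamma adj a p h1 u -> 0 < u i j ->
  a i j * p i j * u i j = Hfun a p u * (xrow u i * xrow u j).
Proof.
move=> Gu uij; have [xi xj] := Gamma_xrow_gt0 Gu uij.
have /matrixP/(_ i j) := Gu.2; rewrite !mxE (gt_eqF uij) => /eqP.
rewrite mulf_eq0 (gt_eqF uij) /= subr_eq0 => /eqP <-.
by rewrite divfK // mulf_neq0 // gt_eqF.
Qed.

Lemma Gamma_Hfun_neq0 u : Gamma adj a p h1 u -> Hfun a p u != 0.
Proof.
move=> Gu; have [[_ [u_ge0 [_ [_ h1_le]]]] _] := Gu.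
apply/eqP => H0; move: h1_le; rewrite leNgt => /negP; apply.
rewrite big1 // => i _; apply: big1 => j cij.
have [/esym//|uij] := eqVneq (u i j) 0.
have uij_gt0 : 0 < u i j by rewrite lt_neqAle eq_sym uij u_ge0.
have /eqP := Gamma_balance Gu uij_gt0.
by rewrite H0 mul0r mulf_eq0 (gt_eqF cij) (negbTE uij).
Qed.

Lemma Gamma_row_sum u i : Gamma adj a p h1 u -> xrow u i != 0 ->
  \sum_(j < n | 0 < u i j) xrow u j / (a i j * p i j) = (Hfun a p u)^-1.
Proof.
move=> Gu ui_neq0; have [[_ [u_ge0 _]] _] := Gu.
have H_neq0 := Gamma_Hfun_neq0 Gu.
set S := \sum_(j < n | _) _.
have ui_eq : xrow u i = Hfun a p u * xrow u i * S.
  rewrite {1}/xrow (bigID (fun j => 0 < u i j)) /= [X in _ + X]big1; last first.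
    by move=> j; rewrite lt_neqAle u_ge0 andbT negbK eq_sym => /eqP.
  rewrite addr0 /S mulr_sumr; apply: eq_bigr => j uij.
  have bal := Gamma_balance Gu uij; have [_ xj] := Gamma_xrow_gt0 Gu uij.
  have cij_neq0 : a i j * p i j != 0.
    apply/eqP => c0; move: bal; rewrite c0 mul0r => /esym/eqP.
    by rewrite !mulf_eq0 (negbTE H_neq0) (negbTE ui_neq0) (gt_eqF xj).
  by rewrite -[u i j](mulKf cij_neq0) bal mulrC -!mulrA.
have HS : Hfun a p u * S = 1 by apply: (mulIf ui_neq0); rewrite mul1r mulrAC -ui_eq.
by rewrite -[S](mulKf H_neq0) HS mulr1.
Qed.

Lemma Gamma_cross_sum x y : Gamma adj a p h1 x -> Gamma adj a p h1 y ->
  (forall i j, (0 < x i j) = (0 < y i j)) ->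
  \sum_(i < n) \sum_(j < n | 0 < y i j) xrow x i * (xrow y j / (a i j * p i j))
  = (Hfun a p y)^-1.
Proof.
move=> [[_ [x_ge0 [_ [x_sum1 _]]]] _] Gy same_supp.
have [[_ [y_ge0 _]] _] := Gy.
transitivity (\sum_(i < n) xrow x i * (Hfun a p y)^-1); last first.
  by rewrite -mulr_suml x_sum1 mul1r.
apply: eq_bigr => i _; rewrite -mulr_sumr.
have [yi0|yi_neq0] := eqVneq (xrow y i) 0; last by rewrite Gamma_row_sum.
suff -> : xrow x i = 0 by rewrite !mul0r.
apply: big1 => j _; apply/eqP; rewrite eq_le x_ge0 andbT leNgt same_supp.
by rewrite (psumr_eq0P (fun k _ => y_ge0 i k) yi0) ?ltxx.
Qed.

Lemma Gamma_Hfun_eq x y :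
  (forall i j, a i j = a j i) -> (forall i j, p i j = p j i) ->
  Gamma adj a p h1 x -> Gamma adj a p h1 y ->
  (forall i j, (0 < x i j) = (0 < y i j)) -> Hfun a p x = Hfun a p y.
Proof.
move=> a_sym p_sym Gx Gy same_supp.
have [[x_sym _] _] := Gx; have [[y_sym _] _] := Gy.
apply: invr_inj; rewrite -(Gamma_cross_sum Gy Gx) -?(Gamma_cross_sum Gx Gy) //.
under [LHS]eq_bigr => i _ do rewrite big_mkcond.
under [RHS]eq_bigr => i _ do rewrite big_mkcond.
rewrite exchange_big /=; apply: eq_bigr => i _; apply: eq_bigr => j _.
rewrite x_sym y_sym -same_supp a_sym p_sym [x j i]x_sym.
by case: ifP => // _; rewrite mulrCA.
Qed.

End GammaIdentities.

Lemma supp_edges_gt0 (R : realType) (n : nat) (adj : rel 'I_n) (x y : 'M[R]_n) :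
  simple_graph adj -> (forall i j, ~~ adj i j -> x i j = 0) ->
  (forall i j, y i j = y j i) -> supp_edges adj x = supp_edges adj y ->
  forall i j, 0 < x i j -> 0 < y i j.
Proof.
move=> [_ adj_irr] x_adj y_sym supp_eq i j xij.
have adj_ij : adj i j by apply: contraTT xij => /x_adj ->; rewrite ltxx.
have : [set i; j]%SET \in supp_edges adj x.
  by rewrite inE; apply/existsP; exists i; apply/existsP; exists j; rewrite eqxx adj_ij xij.
rewrite supp_eq inE => /existsP [k /existsP [l /and3P [/eqP e _ ykl]]].
move: adj_ij; have /set2P[-> | ->] : i \in [set k; l]%SET by rewrite -e set21.
all: have /set2P[-> | ->] : j \in [set k; l]%SET by rewrite -e set22.
- by rewrite (negbTE (adj_irr k)).
- done.
- by rewrite y_sym.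
- by rewrite (negbTE (adj_irr l)).
Qed.

Theorem lemma8 (R : realType) (n : nat) (adj : rel 'I_n) (a p : 'M[R]_n) (h1 : R)
  (Hg : simple_graph adj)
  (Ha_sym : forall i j, a i j = a j i) (Ha_ge0 : forall i j, 0 <= a i j)
  (Ha_adj : forall i j, (0 < a i j)%R -> adj i j)
  (Hp_sym : forall i j, p i j = p j i)
  (Hp_01 : forall i j, 0 <= p i j <= 1)
  (Hp_adj : forall i j, ~~ adj i j -> p i j = 0)
  (Hap : exists i j, (0 < a i j * p i j)%R)
  (Hh1 : 0 < h1 <= 1)
  (theta : {set {set 'I_n}}) (x y : 'M[R]_n) :
  Gamma_theta adj a p h1 theta x ->
  connected_component (Gamma_theta adj a p h1 theta) x y ->
  Hfun a p x = Hfun a p y.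
Proof.
move=> [Gx Ex] /connected_component_sub [Gy Ey].
have h1_gt0 : 0 < h1 by case/andP: Hh1.
have [[x_sym [_ [x_adj _]]] _] := Gx; have [[y_sym [_ [y_adj _]]] _] := Gy.
have supp_eq : supp_edges adj x = supp_edges adj y by rewrite Ex Ey.
apply: (Gamma_Hfun_eq h1_gt0 Ha_sym Hp_sym Gx Gy) => i j; apply/idP/idP.
- exact: (supp_edges_gt0 Hg x_adj y_sym supp_eq).
- exact: (supp_edges_gt0 Hg y_adj x_sym (esym supp_eq)).
Qed.
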